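(* Let $N\ge2$, $d\ge1$, $1\le p\le q\le\infty$, and let $S\subset\mathbb{Z}_N^d$ be a nonempty set for which a $(p,q)$-restriction estimate holds with constant $C_{p,q}>0$. Let $f:\mathbb{Z}_N^d\to\mathbb{C}$ be supported in $E\subset\mathbb{Z}_N^d$, and suppose $$|E|^{1/p}\cdot|S|<\frac{N^d}{2^{1/p}C_{p,q}}.$$ Then $f$ is uniquely determined by the values $\hat f(m)$, $m\notin S$, among signals with at most $|E|$ nonzero entries: if $g:\mathbb{Z}_N^d\to\mathbb{C}$ satisfies $|\{x:g(x)\ne0\}|\le|E|$ and $\hat g(m)=\hat f(m)$ for all $m\notin S$, then $g=f$.
   Context: $\chi(t)=e^{2\pi i t/N}$, $\hat f(m)=N^{-d}\sum_{x\in\mathbb{Z}_N^d}\chi(-x\cdot m)f(x)$. A $(p,q)$-restriction estimate holds for a nonempty $S\subset\mathbb{Z}_N^d$ with constant $C_{p,q}$ if for every $h:\mathbb{Z}_N^d\to\mathbb{C}$, $\big(\frac{1}{|S|}\sum_{m\in S}|\hat h(m)|^q\big)^{1/q}\le C_{p,q}N^{-d}\big(\sum_x|h(x)|^p\big)^{1/p}$ (for $q=\infty$ the left side is $\max_{m\in S}|\hat h(m)|$). The set $S$ is the set of unobserved frequencies. *)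

From HB Require Import structures.
From mathcomp Require Import all_boot all_order all_algebra.
From mathcomp Require Import all_classical all_reals all_analysis.
From mathcomp Require Import complex.
Set Implicit Arguments. Unset Strict Implicit. Unset Printing Implicit Defensive.
Import Order.TTheory GRing.Theory Num.Theory.
Local Open Scope ring_scope.

Definition ZNd (N d : nat) := {ffun 'I_d -> 'I_N}.

(* dot product x . m (an integer; only its class mod N matters for chi) *)
Definition dotZ (N d : nat) (x m : ZNd N d) : nat := (\sum_(i < d) x i * m i)%N.

Section Fourier.
Variable R : realType.

Definition cmod (z : R[i]) : R := ComplexField.Normc.normc z.

Definition chi (N : nat) (t : R) : R[i] :=
  Complex (cos (2 * pi * t / N%:R)) (sin (2 * pi * t / N%:R)).

Definition fhat (N d : nat) (f : ZNd N d -> R[i]) (m : ZNd N d) : R[i] :=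
  ((N%:R ^- d : R)%:C * \sum_(x : ZNd N d) chi N (- (dotZ x m)%:R) * f x)%C.

(* exponents p in [1, +oo] are extended reals; 1/p, with 1/+oo = 0 *)
Definition einv (p : \bar R) : R :=
  match p with EFin r => r^-1 | _ => 0 end.

Definition lpnorm (T : finType) (p : \bar R) (h : T -> R[i]) : R :=
  match p with
  | EFin r => (\sum_(x : T) cmod (h x) `^ r) `^ (r^-1)
  | _ => \big[Num.max/0]_(x : T) cmod (h x)
  end.

Definition avg_qnorm (T : finType) (q : \bar R) (S : {set T}) (h : T -> R[i]) : R :=
  match q with
  | EFin r => ((#|S|%:R)^-1 * \sum_(m in S) cmod (h m) `^ r) `^ (r^-1)
  | _ => \big[Num.max/0]_(m in S) cmod (h m)
  end.

Definition restriction_estimate (N d : nat) (p q : \bar R) (S : {set ZNd N d}) (C : R) : Prop :=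
  forall h : ZNd N d -> R[i],
    avg_qnorm q S (fhat h) <= C * (N%:R ^- d) * lpnorm p h.

End Fourier.

(* If [h] is supported on [k] points and [fhat h] vanishes off [S], Fourier inversion gives
   [|h x| <= sum_(m in S) |fhat h m| <= |S| avg_qnorm q S (fhat h)]; the restriction estimate
   bounds this by [|S| C N^-d lpnorm p h <= |S| C N^-d k^(1/p) max |h|].  So
   [max |h| <= k^(1/p) |S| C N^-d max |h|], which forces [h = 0] once [k^(1/p) |S| C < N^d].
   The corollary applies this to [h = g - f], supported on at most [2|E|] points. *)

From HB Require Import structures.
From mathcomp Require Import all_boot all_order all_algebra.
From mathcomp Require Import all_classical all_reals all_analysis.
From mathcomp Require Import complex.
From mathcomp Require Import ring lra.
Set Implicit Arguments. Unset Strict Implicit. Unset Printing Implicit Defensive.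
Import Order.TTheory GRing.Theory Num.Theory.
Local Open Scope ring_scope.

Section ComplexModulus.
Variable R : realType.

Lemma cmod_ge0 (z : R[i]) : 0 <= cmod z.
Proof. by case: z => a b; rewrite /cmod /= sqrtr_ge0. Qed.

Lemma cmod0 : cmod (0 : R[i]) = 0.
Proof. exact: Normc.normc0. Qed.

Lemma cmodM (x y : R[i]) : cmod (x * y) = cmod x * cmod y.
Proof. exact: Normc.normcM. Qed.

Lemma cmod_eq0 (z : R[i]) : (cmod z == 0) = (z == 0).
Proof.
apply/eqP/eqP => [|->]; [exact: Normc.eq0_normc | exact: cmod0].
Qed.

Lemma ler_cmod_sum (I : Type) (r : seq I) (P : pred I) (F : I -> R[i]) :
  cmod (\sum_(i <- r | P i) F i) <= \sum_(i <- r | P i) cmod (F i).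
Proof.
elim/big_rec2: _ => [|i y z _ Hyz]; first by rewrite cmod0.
by apply: le_trans (le_normcD _ _) _; rewrite lerD2l.
Qed.

End ComplexModulus.

Section Character.
Variables (R : realType) (N : nat).
Hypothesis N_gt0 : (0 < N)%N.

Lemma chiD (a b : R) : chi N (a + b) = chi N a * chi N b.
Proof.
rewrite /chi mulrDr mulrDl cosD sinD.
by congr Complex; ring.
Qed.

Lemma chi0 : chi N (0 : R) = 1.
Proof. by rewrite /chi mulr0 mul0r cos0 sin0. Qed.

Lemma cmod_chi (t : R) : cmod (chi N t) = 1.
Proof. by rewrite /cmod /chi /= cos2Dsin2 sqrtr1. Qed.

Lemma chi_sum (I : Type) (r : seq I) (P : pred I) (F : I -> R) :
  chi N (\sum_(i <- r | P i) F i) = \prod_(i <- r | P i) chi N (F i).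
Proof. exact: (big_morph (chi N) chiD chi0). Qed.

Lemma chi_mulrn (a : R) k : chi N (a * k%:R) = chi N a ^+ k.
Proof.
elim: k => [|k IH]; first by rewrite mulr0 chi0 expr0.
by rewrite -natr1 mulrDr mulr1 chiD IH exprSr.
Qed.

Lemma chi_natM_period (n : nat) : chi N (n%:R * N%:R : R) = 1.
Proof.
have N0 : (N%:R : R) != 0 by rewrite pnatr_eq0 -lt0n.
rewrite /chi.
have -> : 2 * pi * (n%:R * N%:R) / N%:R = 0 + pi *+ 2 *+ n :> R.
  by rewrite add0r -mulr_natr mulr2n; field.
by rewrite (periodicn (@cosD2pi R)) (periodicn (@sinD2pi R)) cos0 sin0.
Qed.

Lemma chi_neq1 (a : R) : a != 0 -> `|a| < N%:R -> chi N a != 1.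
Proof.
move=> a0 aN.
have N0 : (0 : R) < N%:R by rewrite ltr0n.
suff : cos (2 * pi * a / N%:R) < 1 by apply: contraTN => /eqP[-> _]; rewrite ltxx.
set s := pi * (`|a| / N%:R).
have s_def : `|2 * pi * a / N%:R| = s *+ 2.
  rewrite /s !normrM normfV (gtr0_norm N0) (gtr0_norm (@pi_gt0 R)) (gtr0_norm (@ltr0Sn R 1)).
  by rewrite mulr2n; field; rewrite gt_eqF.
have s_pi : 0 < s < pi.
  rewrite mulr_gt0 ?pi_gt0 ?divr_gt0 ?normr_gt0 //=.
  by rewrite -[X in _ < X]mulr1 ltr_pM2l ?pi_gt0 // ltr_pdivrMr // mul1r.
rewrite -cos_norm s_def cos_mulr2n cos2sin2.
have := exprn_gt0 2 (sin_gt0_pi s_pi); lra.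
Qed.

(* Geometric sum: [chi (u - v)] is an [N]-th root of unity, different from [1] unless [u = v]. *)
Lemma sum_chi_ord (u v : nat) : (u < N)%N -> (v < N)%N ->
  \sum_(k < N) chi N ((u%:R - v%:R) * k%:R : R) = if u == v then N%:R else 0.
Proof.
move=> uN vN.
have [->|uv] := eqVneq u v.
  under eq_bigr do rewrite subrr mul0r chi0.
  by rewrite sumr_const card_ord.
set w := chi N (u%:R - v%:R : R).
under eq_bigr do rewrite chi_mulrn.
have wN : w ^+ N = 1.
  have := chi_natM_period u.
  by rewrite -(subrK v%:R u%:R) mulrDl chiD chi_natM_period mulr1 chi_mulrn.
have w_neq1 : w - 1 != 0.
  rewrite subr_eq0 chi_neq1 ?subr_eq0 ?eqr_nat //.
  move: uN vN; rewrite -!(ltr_nat R) ltr_norml => uN vN.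
  by have := ler0n R u; have := ler0n R v; lra.
have := subrX1 w N; rewrite wN subrr => /esym/eqP.
by rewrite mulf_eq0 (negbTE w_neq1) => /eqP.
Qed.

End Character.

Section FourierInversion.
Variables (R : realType) (N d : nat).
Hypothesis N_gt0 : (0 < N)%N.
Local Open Scope complex_scope.

Lemma sum_chi_dotB (y x : ZNd N d) :
  \sum_(m : ZNd N d) chi N ((dotZ y m)%:R - (dotZ x m)%:R : R)
  = if y == x then N%:R ^+ d else 0.
Proof.
have dotB m : ((dotZ y m)%:R - (dotZ x m)%:R : R)
    = \sum_i ((y i)%:R - (x i)%:R) * (m i)%:R.
  by rewrite /dotZ !natr_sum -sumrB; apply: eq_bigr => i _; rewrite !natrM mulrBl.
under eq_bigr do rewrite dotB chi_sum.
rewrite -(bigA_distr_bigA (fun i (k : 'I_N) => chi N (((y i)%:R - (x i)%:R) * k%:R))).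
under eq_bigr do rewrite sum_chi_ord //.
have [->|yx] := eqVneq y x.
  by under eq_bigr do rewrite eqxx; rewrite prodr_const card_ord.
have [i yxi] : exists i, y i != x i.
  by apply/existsP; apply: contraNT yx => /existsPn yx; apply/eqP/ffunP => i; apply/eqP/negPn.
by rewrite (bigD1 i) //= ifN ?mul0r.
Qed.

Lemma fhat_inversion (h : ZNd N d -> R[i]) (y : ZNd N d) :
  \sum_(m : ZNd N d) chi N ((dotZ y m)%:R) * fhat h m = h y.
Proof.
rewrite /fhat.
under eq_bigr do rewrite mulr_sumr mulr_sumr.
rewrite exchange_big /=.
have sum_m x : \sum_(m : ZNd N d) chi N (dotZ y m)%:R *
     ((N%:R ^- d : R)%:C * (chi N (- (dotZ x m)%:R) * h x))
   = ((N%:R ^- d : R)%:C * h x) * \sum_(m : ZNd N d) chi N ((dotZ y m)%:R - (dotZ x m)%:R).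
  by rewrite mulr_sumr; apply: eq_bigr => m _; rewrite chiD; ring.
under eq_bigr do rewrite sum_m sum_chi_dotB.
rewrite (bigD1 y) //= eqxx big1 ?addr0; last first.
  by move=> x /negbTE; rewrite eq_sym => ->; rewrite mulr0.
have Nd_neq0 : (N%:R ^+ d : R) != 0 by rewrite expf_neq0 // pnatr_eq0 -lt0n.
have -> : (N%:R ^+ d : R[i]) = (N%:R ^+ d : R)%:C by rewrite rmorphXn rmorph_nat.
by rewrite mulrAC -rmorphM mulVf // mul1r.
Qed.

Lemma fhatB (g f : ZNd N d -> R[i]) (m : ZNd N d) :
  fhat (fun x => g x - f x) m = fhat g m - fhat f m.
Proof.
rewrite /fhat -mulrBr -sumrB; congr (_ * _).
by apply: eq_bigr => x _; rewrite mulrBr.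
Qed.

End FourierInversion.

Section PowerMeans.
Variable R : realType.

Lemma le_powR_tangent (x r : R) : 0 <= x -> 1 <= r -> x <= x `^ r / r + (1 - r^-1).
Proof.
move=> x0 r1.
have [<-|r_neq1] := eqVneq 1 r; first by rewrite powRr1 // invr1 mulr1 subrr addr0.
have r_gt1 : 1 < r by rewrite lt_neqAle r_neq1.
have r0 : 0 < r by apply: lt_trans r_gt1.
have s0 : 0 < r / (r - 1) by rewrite divr_gt0 // subr_gt0.
have rs : r^-1 + (r / (r - 1))^-1 = 1 by rewrite invf_div; field; rewrite gt_eqF ?subr_gt0.
have := conjugate_powR x0 ler01 r0 s0 rs.
by rewrite mulr1 powR1 div1r invf_div; congr (_ <= _ + _); field; rewrite gt_eqF ?subr_gt0.
Qed.

Lemma sum_le_card_mul_power_mean (T : finType) (S : {set T}) (a : T -> R) (r : R) :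
  1 <= r -> (0 < #|S|)%N -> (forall m, 0 <= a m) ->
  \sum_(m in S) a m <= #|S|%:R * ((#|S|%:R)^-1 * \sum_(m in S) a m `^ r) `^ r^-1.
Proof.
move=> r1 S0 a0.
have r0 : 0 < r by apply: lt_le_trans r1.
set n : R := #|S|%:R; have n0 : 0 < n by rewrite ltr0n.
set B := n^-1 * _; set A := B `^ r^-1.
have B0 : 0 <= B by rewrite mulr_ge0 ?invr_ge0 ?(ltW n0) ?sumr_ge0 // => m _; apply: powR_ge0.
have [B_eq0|B_neq0] := eqVneq B 0.
  have : \sum_(m in S) a m `^ r = 0 by move/eqP: B_eq0; rewrite mulf_eq0 invr_eq0 gt_eqF // => /eqP.
  move=> /psumr_eq0P sum_eq0; rewrite big1 ?mulr_ge0 ?powR_ge0 ?(ltW n0) // => m mS.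
  by apply: (@powR_eq0_eq0 _ _ r); apply: sum_eq0 => // i _; apply: powR_ge0.
have A0 : 0 < A by rewrite powR_gt0 // lt_def B_neq0.
have Ar : A `^ r = B by rewrite -powRrM mulVf ?gt_eqF // powRr1.
have powr_ratio m : (a m / A) `^ r = a m `^ r / B.
  rewrite powRM ?invr_ge0 ?(ltW A0) // -Ar; congr (_ * _).
  by rewrite -(powR_inv1 (ltW A0)) -powRAC powR_inv1 ?powR_ge0.
have sum_pow : \sum_(m in S) a m `^ r = n * B by rewrite /B mulrA mulfV ?gt_eqF ?mul1r.
(* Young's inequality at [a m / A], [A] the [r]-th power mean, summed over [S]. *)
have : \sum_(m in S) a m / A <= \sum_(m in S) (a m `^ r / B / r + (1 - r^-1)).
  apply: ler_sum => m _; rewrite -powr_ratio.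
  by apply: le_powR_tangent; rewrite ?divr_ge0 ?(ltW A0).
rewrite big_split /= sumr_const -!mulr_suml sum_pow -mulr_natl -/n mulfK //.
by rewrite ler_pdivrMr //; congr (_ <= _ * _); field; rewrite gt_eqF.
Qed.

End PowerMeans.

Section Norms.
Variables (R : realType) (T : finType).

Definition sup_cmod (h : T -> R[i]) : R := \big[Num.max/0]_x cmod (h x).

Lemma sup_cmod_ge0 (h : T -> R[i]) : 0 <= sup_cmod h.
Proof. exact: bigmax_ge_id. Qed.

Lemma cmod_le_sup (h : T -> R[i]) (x : T) : cmod (h x) <= sup_cmod h.
Proof. exact: le_bigmax. Qed.

Lemma sup_cmod_le (h : T -> R[i]) (c : R) :
  0 <= c -> (forall x, cmod (h x) <= c) -> sup_cmod h <= c.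
Proof. by move=> c0 hc; apply: bigmax_le. Qed.

Lemma card_support_subr (g f : T -> R[i]) (E : {set T}) :
  (forall x, x \notin E -> f x = 0) ->
  (#|[set x | (g x - f x != 0)%R]| <= #|[set x | g x != 0%R]| + #|E|)%N.
Proof.
move=> fE; apply: leq_trans (leq_card_setU _ _).1.
apply: subset_leq_card; apply/fintype.subsetP => x; rewrite !inE.
by case: (boolP (x \in E)) => [|/fE ->]; rewrite ?orbT // subr0 orbF.
Qed.

Lemma lpnorm_le_card_support (p : \bar R) (h : T -> R[i]) (k : nat) :
  (1 <= p)%E -> (#|[set x | h x != 0%R]| <= k)%N ->
  lpnorm p h <= (k%:R : R) `^ (einv p) * sup_cmod h.
Proof.
case: p => [r||] //= r1 hk; last by rewrite powRr0 mul1r.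
rewrite lee_fin in r1; have r0 : 0 < r by apply: lt_le_trans r1.
set M := sup_cmod h; have M0 : 0 <= M := sup_cmod_ge0 h.
have sum_le : \sum_x cmod (h x) `^ r <= k%:R * M `^ r.
  apply: (@le_trans _ _ (\sum_(x | h x != 0) M `^ r)).
    rewrite [X in _ <= X]big_mkcond /=; apply: ler_sum => x _; case: ifPn => [_|/negPn/eqP->].
      by apply: ge0_ler_powR; rewrite ?nnegrE ?cmod_ge0 ?cmod_le_sup // ltW.
    by rewrite cmod0 powR0 ?gt_eqF.
  rewrite sumr_const -[M `^ r *+ _]mulr_natl ler_wpM2r ?powR_ge0 // ler_nat.
  by apply: leq_trans hk; rewrite cardsE.
apply: (@le_trans _ _ ((k%:R * M `^ r) `^ r^-1)).
  apply: ge0_ler_powR; rewrite ?nnegrE ?invr_ge0 ?(ltW r0) ?mulr_ge0 ?powR_ge0 //.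
  by apply: sumr_ge0 => x _; apply: powR_ge0.
by rewrite powRM ?powR_ge0 // -powRrM mulfV ?gt_eqF // powRr1.
Qed.

Lemma sum_le_card_mul_avg_qnorm (q : \bar R) (S : {set T}) (F : T -> R[i]) :
  (1 <= q)%E -> (0 < #|S|)%N ->
  \sum_(m in S) cmod (F m) <= #|S|%:R * avg_qnorm q S F.
Proof.
case: q => [r||] //= q1 S0.
  by apply: sum_le_card_mul_power_mean; rewrite -?lee_fin // => m; apply: cmod_ge0.
apply: le_trans (_ : _ <= \sum_(m in S) \big[Num.max/0]_(m in S) cmod (F m)) _.
  by apply: ler_sum => m mS; apply: (le_bigmax_cond _ (fun m => cmod (F m)) mS).
by rewrite sumr_const mulr_natl.
Qed.

End Norms.

Section Uncertainty.
Variables (R : realType) (N d : nat).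
Hypothesis N_gt0 : (0 < N)%N.

Lemma cmod_le_card_mul_avg_qnorm (q : \bar R) (S : {set ZNd N d}) (h : ZNd N d -> R[i]) :
  (1 <= q)%E -> (0 < #|S|)%N -> (forall m, m \notin S -> fhat h m = 0) ->
  forall x, cmod (h x) <= #|S|%:R * avg_qnorm q S (fhat h).
Proof.
move=> q1 S0 hS x; rewrite -(fhat_inversion N_gt0 h x).
apply: le_trans (ler_cmod_sum _ _ _) _.
under eq_bigr do rewrite cmodM cmod_chi mul1r.
rewrite (bigID (mem S)) /= [X in _ + X]big1 ?addr0; last by move=> m /hS ->; rewrite cmod0.
exact: sum_le_card_mul_avg_qnorm.
Qed.

Lemma restriction_uncertainty (p q : \bar R) (S : {set ZNd N d}) (C : R)
    (h : ZNd N d -> R[i]) (k : nat) :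
  (1 <= p)%E -> (p <= q)%E -> (0 < #|S|)%N -> 0 <= C ->
  restriction_estimate p q S C ->
  (#|[set x | h x != 0%R]| <= k)%N ->
  (k%:R : R) `^ (einv p) * #|S|%:R * C < N%:R ^+ d ->
  (forall m, m \notin S -> fhat h m = 0) ->
  forall x, h x = 0.
Proof.
move=> p1 pq S0 C0 restr hk small hS.
have Nd_gt0 : (0 : R) < N%:R ^+ d by rewrite exprn_gt0 // ltr0n.
set K := (k%:R : R) `^ (einv p) * #|S|%:R * C / N%:R ^+ d.
have K0 : 0 <= K by rewrite divr_ge0 ?mulr_ge0 ?powR_ge0 // ltW.
have K_lt1 : K < 1 by rewrite ltr_pdivrMr // mul1r.
set M := sup_cmod h.
have M_le : M <= K * M.
  apply: sup_cmod_le => [|x]; first by rewrite mulr_ge0 ?sup_cmod_ge0.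
  apply: le_trans (cmod_le_card_mul_avg_qnorm (le_trans p1 pq) S0 hS x) _.
  apply: le_trans (_ : _ <= #|S|%:R * (C * N%:R ^- d * lpnorm p h)) _.
    by rewrite ler_wpM2l ?restr.
  have := lpnorm_le_card_support p1 hk; rewrite -/M => lpM.
  apply: le_trans (_ : _ <= #|S|%:R * (C * N%:R ^- d * (k%:R `^ einv p * M))) _.
    by rewrite ler_wpM2l // ler_wpM2l // mulr_ge0 ?invr_ge0 // ltW.
  suff -> : #|S|%:R * (C * N%:R ^- d * (k%:R `^ einv p * M)) = K * M by [].
  by rewrite /K; ring.
have M0 : M <= 0 by have := sup_cmod_ge0 h; nra.
move=> x; apply/eqP; rewrite -cmod_eq0 eq_le cmod_ge0 andbT.
exact: le_trans (cmod_le_sup h x) M0.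
Qed.

End Uncertainty.

Theorem corollary4 (R : realType) (N d : nat) (p q : \bar R)
  (S : {set ZNd N d}) (C : R) (f : ZNd N d -> R[i]) (E : {set ZNd N d}) :
  (2 <= N)%N -> (1 <= d)%N ->
  (1 <= p)%E -> (p <= q)%E ->
  (0 < #|S|)%N -> 0 < C ->
  restriction_estimate p q S C ->
  (forall x, x \notin E -> f x = 0) ->
  (#|E|%:R : R) `^ (einv p) * #|S|%:R < N%:R ^+ d / (2 `^ (einv p) * C) ->
  forall g : ZNd N d -> R[i],
    (#|[set x | g x != 0%R]| <= #|E|)%N ->
    (forall m, m \notin S -> fhat g m = fhat f m) ->
    g = f.
Proof.
move=> N2 _ p1 pq S0 C0 restr fE small g gE fhat_gf.
have N0 : (0 < N)%N by apply: leq_trans N2.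
have supp_gf : (#|[set x | (g x - f x != 0)%R]| <= #|E| + #|E|)%N.
  by apply: leq_trans (card_support_subr g fE) _; rewrite leq_add2r.
have small2 : ((#|E| + #|E|)%N%:R : R) `^ einv p * #|S|%:R * C < N%:R ^+ d.
  have two_pow_gt0 : 0 < 2 `^ einv p * C :> R by rewrite mulr_gt0 ?powR_gt0.
  rewrite ltr_pdivlMr // in small.
  have -> : ((#|E| + #|E|)%N%:R : R) = 2 * #|E|%:R by rewrite natrD; ring.
  rewrite powRM //.
  suff -> : 2 `^ einv p * #|E|%:R `^ einv p * #|S|%:R * C
          = #|E|%:R `^ einv p * #|S|%:R * (2 `^ einv p * C) by [].
  by ring.
apply/funext => x; apply/eqP; rewrite -subr_eq0; apply/eqP; move: x.
apply: (restriction_uncertainty N0 p1 pq S0 (ltW C0) restr supp_gf small2).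
by move=> m mS; rewrite fhatB fhat_gf // subrr.
Qed.
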